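(* Let $\phi=(\psi\to(\Box\chi\vee\xi))$ be a d-persistent intuitionistic modal formula that does not contain the proposition letter $p$ as a subformula. Then $\phi^p$ is $\kappa_\emptyset$-persistent.
   Context: Intuitionistic modal formulas are given by $\phi ::= q\mid\bot\mid\phi\wedge\phi\mid\phi\vee\phi\mid\phi\to\phi\mid\Box\phi$. A modal Esakia space is $(X,\leq,R,\tau)$ with $(X,\leq,\tau)$ an Esakia space, $R[x]$ closed for all $x$ and $R=(\leq\circ R\circ\leq)$; a formula is d-persistent if whenever it is valid on a modal Esakia space (with clopen-upset valuations) it is also valid on the underlying modal frame $(X,\leq,R)$ (with arbitrary upset valuations). The translation $(-)^p$ into the conditional language ($\phi ::= q\mid\bot\mid\phi\wedge\phi\mid\phi\vee\phi\mid\phi\to\phi\mid\phi\mathrel{\Box\!\!\!\rightarrow}\phi$) is identity on letters, $\top,\bot$, commutes with $\wedge,\vee,\to$, and sends $\Box\psi$ to $p\mathrel{\Box\!\!\!\rightarrow}\psi^p$. A conditional Esakia space is an Esakia space $(X,\leq,\tau)$ with relations $\{R_a\mid a\text{ a clopen upset}\}$ such that $\{x\mid R_a[x]\subseteq b\}$ is clopen for clopen upsets $a,b$, $(\leq\circ R_a\circ\leq)=R_a$, and each $R_a[x]$ is closed. Its empty fill-in is the conditional frame keeping $R_a$ for clopen upsets $a$ and setting $R_a=\emptyset$ for non-clopen upsets $a$; a formula is $\kappa_\emptyset$-persistent if its validity on any conditional Esakia space implies its validity on the empty fill-in. In conditional frames, $x\models\phi\mathrel{\Box\!\!\!\rightarrow}\psi$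 iff every $y$ with $xR_{V(\phi)}y$ satisfies $\psi$. *)

From HB Require Import structures.
From mathcomp Require Import all_boot all_order.
From mathcomp Require Import all_classical all_reals.
From mathcomp Require Import topology.
Set Implicit Arguments. Unset Strict Implicit. Unset Printing Implicit Defensive.
Local Open Scope classical_set_scope.

Inductive mform : Type :=
| MVar : nat -> mform
| MBot : mform
| MAnd : mform -> mform -> mform
| MOr  : mform -> mform -> mform
| MImp : mform -> mform -> mform
| MBox : mform -> mform.

Inductive cform : Type :=
| CVar : nat -> cform
| CBot : cform
| CAnd : cform -> cform -> cform
| COr  : cform -> cform -> cform
| CImp : cform -> cform -> cform
| CCond : cform -> cform -> cform.

Fixpoint mletter_occurs (q : nat) (phi : mform) : Prop :=
  match phi with
  | MVar n => n = q
  | MBot => False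
  | MAnd a b | MOr a b | MImp a b => mletter_occurs q a \/ mletter_occurs q b
  | MBox a => mletter_occurs q a
  end.

Fixpoint ptrans (p : nat) (phi : mform) : cform :=
  match phi with
  | MVar n => CVar n
  | MBot => CBot
  | MAnd a b => CAnd (ptrans p a) (ptrans p b)
  | MOr a b => COr (ptrans p a) (ptrans p b)
  | MImp a b => CImp (ptrans p a) (ptrans p b)
  | MBox a => CCond (CVar p) (ptrans p a)
  end.

Section Notions.
Context {X : Type}.

Definition upset (le : X -> X -> Prop) (U : set X) : Prop :=
  forall x y, le x y -> U x -> U y.

Definition downclosure (le : X -> X -> Prop) (U : set X) : set X :=
  [set x | exists2 y, U y & le x y].

Definition partial_order (le : X -> X -> Prop) : Prop :=
  (forall x, le x x) /\
  (forall x y z, le x y -> le y z -> le x z) /\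
  (forall x y, le x y -> le y x -> x = y).

Definition le_comp_closed (le : X -> X -> Prop) (R : X -> X -> Prop) : Prop :=
  forall x y, R x y <-> exists x' y', [/\ le x x', R x' y' & le y' y].

End Notions.

Definition clopen_upset {X : topologicalType} (le : X -> X -> Prop) (U : set X) :=
  clopen U /\ upset le U.

Definition esakia_space (X : topologicalType) (le : X -> X -> Prop) : Prop :=
  [/\ partial_order le,
      compact [set: X],
      (forall x y, ~ le x y -> exists U, [/\ clopen_upset le U, U x & ~ U y]) &
      (forall U : set X, clopen U -> clopen (downclosure le U))].

Definition modal_esakia_space (X : topologicalType) (le : X -> X -> Prop)
  (R : X -> X -> Prop) : Prop :=
  [/\ esakia_space le, (forall x, closed (R x)) & le_comp_closed le R].

(* conditional Esakia space: the family {R_a | a clopen upset} is represented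
   by a function Rc from subsets of X to relations; only its values at clopen
   upsets matter. *)
Definition conditional_esakia_space (X : topologicalType) (le : X -> X -> Prop)
  (Rc : set X -> X -> X -> Prop) : Prop :=
  esakia_space le /\
  forall a, clopen_upset le a ->
    [/\ (forall b, clopen_upset le b -> clopen [set x | forall y, Rc a x y -> b y]),
        le_comp_closed le (Rc a) &
        (forall x, closed (Rc a x))].

Definition empty_fill_in (X : topologicalType) (le : X -> X -> Prop)
  (Rc : set X -> X -> X -> Prop) : set X -> X -> X -> Prop :=
  fun a x y => clopen_upset le a /\ Rc a x y.

Fixpoint meval {X : Type} (le R : X -> X -> Prop) (V : nat -> set X)
  (phi : mform) : set X :=
  match phi with
  | MVar n => V n
  | MBot => set0
  | MAnd a b => meval le R V a `&` meval le R V b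
  | MOr a b => meval le R V a `|` meval le R V b
  | MImp a b => [set x | forall y, le x y -> meval le R V a y -> meval le R V b y]
  | MBox a => [set x | forall y, R x y -> meval le R V a y]
  end.

Fixpoint ceval {X : Type} (le : X -> X -> Prop) (Rc : set X -> X -> X -> Prop)
  (V : nat -> set X) (phi : cform) : set X :=
  match phi with
  | CVar n => V n
  | CBot => set0
  | CAnd a b => ceval le Rc V a `&` ceval le Rc V b
  | COr a b => ceval le Rc V a `|` ceval le Rc V b
  | CImp a b => [set x | forall y, le x y -> ceval le Rc V a y -> ceval le Rc V b y]
  | CCond a b => [set x | forall y, Rc (ceval le Rc V a) x y -> ceval le Rc V b y]
  end.

Definition mvalid_space (X : topologicalType) (le R : X -> X -> Prop) (phi : mform) :=
  forall V : nat -> set X, (forall n, clopen_upset le (V n)) ->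
    forall x, meval le R V phi x.

Definition mvalid_frame {X : Type} (le R : X -> X -> Prop) (phi : mform) :=
  forall V : nat -> set X, (forall n, upset le (V n)) ->
    forall x, meval le R V phi x.

Definition cvalid_space (X : topologicalType) (le : X -> X -> Prop)
  (Rc : set X -> X -> X -> Prop) (phi : cform) :=
  forall V : nat -> set X, (forall n, clopen_upset le (V n)) ->
    forall x, ceval le Rc V phi x.

Definition cvalid_frame {X : Type} (le : X -> X -> Prop)
  (Rc : set X -> X -> X -> Prop) (phi : cform) :=
  forall V : nat -> set X, (forall n, upset le (V n)) ->
    forall x, ceval le Rc V phi x.

Definition d_persistent (phi : mform) : Prop :=
  forall (X : topologicalType) (le R : X -> X -> Prop),
    modal_esakia_space le R -> mvalid_space le R phi -> mvalid_frame le R phi.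

Definition kappa_empty_persistent (phi : cform) : Prop :=
  forall (X : topologicalType) (le : X -> X -> Prop) (Rc : set X -> X -> X -> Prop),
    conditional_esakia_space le Rc -> cvalid_space le Rc phi ->
    cvalid_frame le (empty_fill_in le Rc) phi.

From mathcomp Require Import all_boot all_classical topology.

(* Fix an upset valuation V on a conditional Esakia space and put a := V p.
   If a is not a clopen upset, the empty fill-in makes R_a empty, so the
   consequent p []-> chi^p of phi^p holds everywhere.  If a is a clopen
   upset, the fill-in agrees with R_a, phi^p evaluates as phi on the modal
   Esakia space (X, <=, R_a), and validity of phi^p on the conditional space
   yields validity of phi on that modal space, because p does not occur in
   phi and may be reassigned to a; d-persistence then finishes. *)

Local Open Scope classical_set_scope.

Lemma ceval_ptrans {X : Type} (le : X -> X -> Prop) Rc V p phi :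
  ceval le Rc V (ptrans p phi) = meval le (Rc (V p)) V phi.
Proof.
by elim: phi => [n| |a IHa b IHb|a IHa b IHb|a IHa b IHb|a IHa] //=;
  rewrite ?IHa ?IHb.
Qed.

Lemma eq_meval_off {X : Type} (le R : X -> X -> Prop) V1 V2 p phi :
  ~ mletter_occurs p phi -> (forall n, n <> p -> V1 n = V2 n) ->
  meval le R V1 phi = meval le R V2 phi.
Proof.
move=> + HV; elim: phi => [n| |a IHa b IHb|a IHa b IHb|a IHa b IHb|a IHa] //= Hp.
- exact: HV.
- by rewrite IHa ?IHb // => ?; apply: Hp; [right|left].
- by rewrite IHa ?IHb // => ?; apply: Hp; [right|left].
- by rewrite IHa ?IHb // => ?; apply: Hp; [right|left].
- by rewrite IHa.
Qed.

Lemma empty_fill_in_clopen (X : topologicalType) le Rc (a : set X) :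
  clopen_upset le a -> empty_fill_in le Rc a = Rc a.
Proof.
by move=> Ha; apply/funext => x; apply/funext => y; apply/propext; split=> [[]|].
Qed.

Lemma conditional_esakia_modal {X : topologicalType} {le Rc} {a : set X} :
  conditional_esakia_space le Rc -> clopen_upset le a ->
  modal_esakia_space le (Rc a).
Proof. by move=> [Hes HRc] /HRc[_ Hcomp Hclosed]; split. Qed.

Section ClopenCase.
Variables (X : topologicalType) (le : X -> X -> Prop).
Variables (Rc : set X -> X -> X -> Prop) (p : nat) (phi : mform).
Hypotheses (Hcond : conditional_esakia_space le Rc)
  (Hp : ~ mletter_occurs p phi).

Lemma mvalid_space_of_ptrans {a : set X} : clopen_upset le a ->
  cvalid_space le Rc (ptrans p phi) -> mvalid_space le (Rc a) phi.
Proof.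
move=> Ha Hval V HV x.
pose Va n := if n == p then a else V n.
have HVa n : clopen_upset le (Va n) by rewrite /Va; case: eqP.
have := Hval Va HVa x; rewrite ceval_ptrans /Va eqxx -/Va.
by rewrite (eq_meval_off _ _ Va V _ _ Hp) // => n /eqP/negbTE; rewrite /Va => ->.
Qed.

Lemma ceval_ptrans_clopen V : d_persistent phi ->
  cvalid_space le Rc (ptrans p phi) -> (forall n, upset le (V n)) ->
  clopen_upset le (V p) ->
  forall x, ceval le (empty_fill_in le Rc) V (ptrans p phi) x.
Proof.
move=> Hd Hval HV Ha x; rewrite ceval_ptrans empty_fill_in_clopen //.
have Hsp := mvalid_space_of_ptrans Ha Hval.
exact: (Hd _ _ _ (conditional_esakia_modal Hcond Ha) Hsp V HV).
Qed.

End ClopenCase.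

Lemma ceval_ptrans_imp_box_nonclopen (X : topologicalType) le Rc V p
    (psi chi xi : mform) (x : X) :
  ~ clopen_upset le (V p) ->
  ceval le (empty_fill_in le Rc) V (ptrans p (MImp psi (MOr (MBox chi) xi))) x.
Proof. by move=> Ha y _ _; left=> z []. Qed.

Theorem theorem7p10 (p : nat) (psi chi xi : mform) :
  d_persistent (MImp psi (MOr (MBox chi) xi)) ->
  ~ mletter_occurs p (MImp psi (MOr (MBox chi) xi)) ->
  kappa_empty_persistent (ptrans p (MImp psi (MOr (MBox chi) xi))).
Proof.
move=> Hd Hp X le Rc Hcond Hval V HV x.
have [Ha|Ha] := EM (clopen_upset le (V p)).
- exact: ceval_ptrans_clopen.
- exact: ceval_ptrans_imp_box_nonclopen.
Qed.
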